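(* Let $p$ be a prime, $R$ an $F$-pure ring of characteristic $p$, and $f\in R$ a non-zero non-unit. Let $d\ge1$ and $\alpha\in[0,1]\cap\frac{1}{p^d}\mathbb{N}$. If for some $e\ge1$ the inclusion $R\cdot f^{\lceil p^e\alpha\rceil/p^e}\subseteq R^{1/p^e}$ splits over $R$, then the inclusion $R\cdot f^{\alpha}\subseteq R^{1/p^d}$ splits over $R$.
   Context: A ring $R$ of characteristic $p$ is $F$-pure if $R\subseteq R^{1/p}$ splits as a map of $R$-modules; such a ring is reduced. Roots. $R^{1/p^e}$ is the ring of formal symbols $r^{1/p^e}$ ($r\in R$), with $r^{1/p^e}+s^{1/p^e}=(r+s)^{1/p^e}$ and $r^{1/p^e}s^{1/p^e}=(rs)^{1/p^e}$. It contains $R$ via $r\mapsto(r^{p^e})^{1/p^e}$. Powers of $f$. For $a\in\mathbb{N}$, $f^{a/p^e}:=(f^a)^{1/p^e}$; in particular $f^\alpha=f^{a/p^d}$ when $\alpha=a/p^d$. Splitting. The inclusion $R\cdot t\subseteq R^{1/p^e}$ splits over $R$ if some $R$-linear $\theta:R^{1/p^e}\to R$ has $\theta(t)=1$. *)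

From mathcomp Require Import all_boot all_algebra.
Unset Printing Implicit Defensive.
Import GRing.Theory.
Local Open Scope ring_scope.

(* Model of R^{1/p^e}: its elements are the formal symbols r^{1/p^e}, r : R,
   which we identify with r itself (the underlying carrier is a copy of R,
   with the same ring operations).  The R-module structure is
   r . s^{1/p^e} = (r^{p^e} s)^{1/p^e}, and R embeds via r |-> (r^{p^e})^{1/p^e}.
   Hence an R-linear map theta : R^{1/p^e} -> R is a function theta : R -> R
   which is additive and satisfies theta (r^{p^e} * x) = r * theta x. *)
Definition root_linear (R : comUnitRingType) (q : nat) (theta : R -> R) : Prop :=
  (forall x y : R, theta (x + y) = theta x + theta y) /\
  (forall r x : R, theta (r ^+ q * x) = r * theta x).

(* The inclusion R . t  ⊆ R^{1/p^e} (t = the symbol t^{1/p^e}) splits over R. *)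
Definition root_splits (R : comUnitRingType) (p e : nat) (t : R) : Prop :=
  exists theta : R -> R, root_linear R (p ^ e) theta /\ theta t = 1.

(* F-pure: the inclusion R ⊆ R^{1/p}, r |-> (r^p)^{1/p}, splits as a map of
   R-modules. *)
Definition Fpure (R : comUnitRingType) (p : nat) : Prop :=
  exists theta : R -> R, root_linear R p theta /\ (forall r : R, theta (r ^+ p) = r).

Definition ceil_div (m n : nat) : nat := ((m + n.-1) %/ n)%N.

From mathcomp Require Import all_boot all_algebra zify.
Import GRing.Theory.
Local Open Scope ring_scope.

(* A splitting at level e sending f^{c/p^e} to 1 can be moved to any level d:
   if d <= e, precompose with the p^{e-d}-th power map, which is additive in
   characteristic p and sends f^{a/p^d} to f^{a p^{e-d}/p^e}; if d > e,
   precompose with the (d-e)-fold iterate of the F-splitting, which sends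
   f^{c p^{d-e}/p^d} to f^{c/p^e}, and finally use that f^{a/p^d} divides
   f^{c p^{d-e}/p^d} because p^e a <= p^d c. *)

Lemma frobenius_iterD (R : comUnitRingType) (p k : nat) (x y : R) :
  p \in [pchar R] -> (x + y) ^+ (p ^ k) = x ^+ (p ^ k) + y ^+ (p ^ k).
Proof. by move=> pR; rewrite exprDn_pchar // pnatX (pnatE _ (pcharf_prime pR)) pR. Qed.

Lemma ceil_div_mull (n m : nat) : (0 < n)%N -> ceil_div (n * m) n = m.
Proof.
by move=> n_gt0; rewrite /ceil_div mulnC divnMDl // divn_small ?addn0 ?prednK.
Qed.

Lemma leq_ceil_div (m n : nat) : (0 < n)%N -> (m <= ceil_div m n * n)%N.
Proof. by move=> n_gt0; have := ltn_ceil (m + n.-1) n_gt0; rewrite -/(ceil_div m n); lia. Qed.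

Section RootSplittings.

Variables (R : comUnitRingType) (p : nat).

Lemma root_linear_comp (q q' : nat) (theta theta' : R -> R) :
  root_linear R q theta -> root_linear R q' theta' ->
  root_linear R (q' * q) (theta' \o theta).
Proof.
move=> [thD thM] [th'D th'M]; split=> [x y | r x] /=; first by rewrite thD th'D.
by rewrite exprM thM th'M.
Qed.

(* [t ^+ p^k * s] at level [e + k] is the element t^{1/p^e} s^{1/p^(e+k)}. *)
Lemma root_splits_comp (e k : nat) (t s : R) :
  root_splits R p e t -> root_splits R p k s ->
  root_splits R p (e + k) (t ^+ (p ^ k) * s).
Proof.
move=> [theta [thL th1]] [phi [phiL phi1]].
have [_ phiM] := phiL.
exists (theta \o phi); split; first by rewrite expnD; exact: root_linear_comp.
by rewrite /= phiM phi1 mulr1.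
Qed.

Lemma Fpure_root_splits1 (k : nat) : Fpure R p -> root_splits R p k 1.
Proof.
move=> [phi [phiL phiF]]; have split1 : root_splits R p 1 1.
  by exists phi; rewrite expn1; split=> //; rewrite -{1}(expr1n R p) phiF.
elim: k => [|k IHk].
  by exists id; split=> //; split=> // r x; rewrite expn0 expr1.
by have := @root_splits_comp k 1 1 1 IHk split1; rewrite addn1 expr1n mulr1.
Qed.

Lemma root_splits_lift (e k : nat) (t : R) :
  Fpure R p -> root_splits R p e t -> root_splits R p (e + k) (t ^+ (p ^ k)).
Proof.
move=> Fp te; have := @root_splits_comp e k t 1 te (Fpure_root_splits1 k Fp).
by rewrite mulr1.
Qed.

Lemma root_splits_frobenius (e k : nat) (t : R) : p \in [pchar R] ->
  root_splits R p (e + k) (t ^+ (p ^ k)) -> root_splits R p e t.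
Proof.
move=> pR [theta [[thD thM] th1]].
exists (fun x => theta (x ^+ (p ^ k))); split=> //; split=> [x y | r x].
  by rewrite frobenius_iterD // thD.
by rewrite exprMn -exprM -expnD thM.
Qed.

Lemma root_splitsMr (e : nat) (t s : R) :
  root_splits R p e (t * s) -> root_splits R p e t.
Proof.
move=> [theta [[thD thM] th1]].
exists (fun x => theta (x * s)); split=> //; split=> [x y | r x].
  by rewrite mulrDl thD.
by rewrite -mulrA thM.
Qed.

End RootSplittings.

Theorem mainTheorem9 (p : nat) (R : comUnitRingType) (f : R) (d a : nat) :
  prime p -> p \in [pchar R] -> Fpure R p ->
  f != 0 -> f \isn't a GRing.unit ->
  (1 <= d)%N -> (a <= p ^ d)%N ->
  (exists e : nat, (1 <= e)%N /\ root_splits R p e (f ^+ ceil_div (p ^ e * a) (p ^ d))) ->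
  root_splits R p d (f ^+ a).
Proof.
move=> p_pr pR Fp _ _ _ _ [e [_ split_e]].
have pX_gt0 n : (0 < p ^ n)%N by rewrite expn_gt0 prime_gt0.
case: (leqP d e) => [le_de | /ltnW le_ed].
  move: split_e; rewrite -(subnKC le_de) expnD -mulnA ceil_div_mull // mulnC exprM.
  exact: root_splits_frobenius.
move: split_e; set c := ceil_div _ _ => split_e.
rewrite -(subnKC le_ed) in c split_e *; set k := (d - e)%N in c split_e *.
have le_a_c : (a <= c * p ^ k)%N.
  rewrite -(leq_pmul2l (pX_gt0 e)) mulnCA -expnD.
  exact: leq_ceil_div.
apply: (@root_splitsMr _ _ _ _ (f ^+ (c * p ^ k - a))).
rewrite -exprD subnKC // exprM.
exact: root_splits_lift.
Qed.
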